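(* The class of weak betweenness algebras is not closed under (direct) products.
   Context: A PS-algebra is $\langle A,f,g\rangle$ where $A$ is a Boolean algebra with at least two elements (operations $+,\cdot,-,0,1$) and $f,g\colon A^2\to A$ satisfy: $f(x,y)=0$ whenever $x=0$ or $y=0$; $f$ is additive in each argument; $g(x,y)=1$ whenever $x=0$ or $y=0$; $g$ is co-additive in each argument ($g(x+x',y)=g(x,y)\cdot g(x',y)$, $g(x,y+y')=g(x,y)\cdot g(x,y')$). A weak betweenness algebra is a PS-algebra satisfying for all $x,y,z,a$: (ABT0) $x\leq f(x,x)$; (ABT1$_f$) $f(x,y)\leq f(y,x)$; (ABT1$_g$) $g(x,y)\leq g(y,x)$; (ABT2) $y\cdot f(x,z)\leq f(x\cdot f(x,y),z)$; (ABTW) $a\neq0\Rightarrow g(a,a)\leq a$. Products are taken componentwise. *)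

(* Boolean algebras are modelled as MathComp's
   complemented distributive lattices with top and bottom
   (ctbDistrLatticeType): + = join `|`, . = meet `&`, - = compl ~`,
   0 = \bot, 1 = \top, <= the lattice order. *)
From HB Require Import structures.
From mathcomp Require Import all_boot all_order.
Set Implicit Arguments. Unset Strict Implicit. Unset Printing Implicit Defensive.
Import Order.Theory.
Local Open Scope order_scope.

Section Defs.
Context {disp : Order.disp_t} (T : ctbDistrLatticeType disp).

Definition PS_algebra (f g : T -> T -> T) : Prop :=
  (\bot : T) != \top /\
      (forall x y, x = \bot \/ y = \bot -> f x y = \bot) /\
      (forall x x' y, f (x `|` x') y = f x y `|` f x' y) /\
      (forall x y y', f x (y `|` y') = f x y `|` f x y') /\
      (forall x y, x = \bot \/ y = \bot -> g x y = \top) /\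
      (forall x x' y, g (x `|` x') y = g x y `&` g x' y) /\
      (forall x y y', g x (y `|` y') = g x y `&` g x y').

Definition weak_betweenness_algebra (f g : T -> T -> T) : Prop :=
  PS_algebra f g /\
      (forall x, x <= f x x) /\
      (forall x y, f x y <= f y x) /\
      (forall x y, g x y <= g y x) /\
      (forall x y z, y `&` f x z <= f (x `&` f x y) z) /\
      (forall a, a != \bot -> g a a <= a).
End Defs.

Definition prod_op (T1 T2 : Type) (f1 : T1 -> T1 -> T1) (f2 : T2 -> T2 -> T2)
  (x y : T1 * T2) : T1 * T2 := (f1 x.1 y.1, f2 x.2 y.2).

(* In a product of two PS-algebras the element a = (1, 0) is nonzero, but
   g(a, a) = (g(1, 1), g(0, 0)) has second component g(0, 0) = 1, which is not
   below 0; so ABTW fails in every such product.  On the other hand every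
   nontrivial Boolean algebra carries a weak betweenness structure (meet for f,
   and for g the indicator of a zero argument), so the two-element algebra
   gives factors that are weak betweenness algebras. *)
From mathcomp Require Import all_boot all_order.
Import Order.Theory.

Local Open Scope order_scope.

Section BotIndicator.
Context {disp : Order.disp_t} {T : ctbDistrLatticeType disp}.

Definition bot_indicator (x y : T) : T :=
  if (x == \bot) || (y == \bot) then \top else \bot.

Lemma bot_indicatorUl x x' y :
  bot_indicator (x `|` x') y = bot_indicator x y `&` bot_indicator x' y.
Proof.
rewrite /bot_indicator join_eq0.
by case: (x == \bot); case: (x' == \bot); case: (y == \bot);
  rewrite ?meetxx ?meet1x ?meetx1 ?meet0x ?meetx0.
Qed.

Lemma bot_indicatorC x y : bot_indicator x y = bot_indicator y x.
Proof. by rewrite /bot_indicator orbC. Qed.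

Lemma meet_bot_indicator_weak_betweenness :
  (\bot : T) != \top -> weak_betweenness_algebra (@Order.meet _ T) bot_indicator.
Proof.
move=> bot_neq_top; do ![split] => //.
- by move=> x y [->|->]; rewrite ?meet0x ?meetx0.
- exact: meetUl.
- exact: meetUr.
- by move=> x y [->|->]; rewrite /bot_indicator eqxx ?orbT.
- exact: bot_indicatorUl.
- by move=> x y y'; rewrite !(bot_indicatorC x) bot_indicatorUl.
- by move=> x; rewrite meetxx.
- by move=> x y; rewrite meetC.
- by move=> x y; rewrite bot_indicatorC.
- by move=> x y z; rewrite !meetA meetxx (meetC y x).
- by move=> a /negbTE a_neq0; rewrite /bot_indicator a_neq0 le0x.
Qed.

End BotIndicator.

Lemma PS_algebra_prod_not_weak_betweenness
    (d1 d2 : Order.disp_t) (A : ctbDistrLatticeType d1)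
    (B : ctbDistrLatticeType d2)
    (fA gA : A -> A -> A) (fB gB : B -> B -> B) :
  PS_algebra fA gA -> PS_algebra fB gB ->
  ~ weak_betweenness_algebra (T := (A *p B)%type)
      (prod_op fA fB) (prod_op gA gB).
Proof.
move=> [A_nontriv _] [B_nontriv [_ [_ [_ [gB_bot _]]]]].
move=> [_ [_ [_ [_ [_ ABTW]]]]].
have a_neq0 : ((\top, \bot) : A *p B) != \bot.
  by apply: contra A_nontriv => /eqP[->].
have := ABTW _ a_neq0; rewrite leEprod /= gB_bot; last by left.
by rewrite andbC lex0 eq_sym (negbTE B_nontriv).
Qed.

Theorem proposition38 :
  exists (d1 d2 : Order.disp_t) (A : ctbDistrLatticeType d1)
         (B : ctbDistrLatticeType d2)
         (fA gA : A -> A -> A) (fB gB : B -> B -> B),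
    weak_betweenness_algebra fA gA /\
    weak_betweenness_algebra fB gB /\
    ~ weak_betweenness_algebra (T := (A *p B)%type)
        (prod_op fA fB) (prod_op gA gB).
Proof.
have bool_wb := @meet_bot_indicator_weak_betweenness _ bool isT.
exists _, _, bool, bool, Order.meet, bot_indicator, Order.meet, bot_indicator.
do 2![split; first exact: bool_wb].
by apply: PS_algebra_prod_not_weak_betweenness; case: bool_wb.
Qed.
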